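(* Fix one of the two variants $\sharp\in\{\text{lumped},\text{exact}\}$ described in the context. Let $T>0$, and let $\vec X^h\in C^1([0,T];\underline V^h)$ with $\vec X^h(t)\in\underline V^h_{\partial_0}$, $|\vec X^h_\rho(t)|>0$ a.e., and $\vec X^h(\rho,t)\cdot\vec e_1>0$ for $\rho\in\overline I\setminus\partial_0I$, $t\in[0,T]$; assume $\vec X^h_t(t)\in\underline V^h_\partial$ for all $t\in(0,T]$. (i) If $\kappa^h(t)\in W_\sharp$ and for all $t\in(0,T]$ $$\big((\vec X^h\cdot\vec e_1)\vec X^h_t,\chi\,\vec\nu^h|\vec X^h_\rho|\big)_\sharp=\big(\vec X^h\cdot\vec e_1\,\kappa^h,\chi|\vec X^h_\rho|\big)_\sharp\ \ \forall\chi\in W_\sharp,$$ $$\big(\vec X^h\cdot\vec e_1\,\kappa^h\vec\nu^h,\vec\eta|\vec X^h_\rho|\big)_\sharp+\big(\vec\eta\cdot\vec e_1,|\vec X^h_\rho|\big)+\big((\vec X^h\cdot\vec e_1)\vec X^h_\rho,\vec\eta_\rho|\vec X^h_\rho|^{-1}\big)=-\sum_{i=1}^2\sum_{p\in\partial_iI}\widehat\varrho^{(p)}(\vec X^h(p,t)\cdot\vec e_1)\vec\eta(p)\cdot\vec e_{3-i}\ \ \forall\vec\eta\in\underline V^h_\partial,$$ then $-\frac1{2\pi}\frac{d}{dt}E(\vec X^h(t))=\big(\vec X^h\cdot\vec e_1\,|\kappa^h|^2,|\vec X^h_\rho|\big)_\sharp\ge0$. (ii) If $\vec\kappa^h(t)\in[W_\sharp]^2$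 and for all $t\in(0,T]$ the same two equations hold with $\kappa^h\vec\nu^h$ replaced by $\vec\kappa^h$ in the second, and the first replaced by $\big((\vec X^h\cdot\vec e_1)\vec X^h_t,\vec\chi|\vec X^h_\rho|\big)_\sharp=\big((\vec X^h\cdot\vec e_1)\vec\kappa^h,\vec\chi|\vec X^h_\rho|\big)_\sharp$ for all $\vec\chi\in[W_\sharp]^2$, then $-\frac1{2\pi}\frac{d}{dt}E(\vec X^h(t))=\big(\vec X^h\cdot\vec e_1\,|\vec\kappa^h|^2,|\vec X^h_\rho|\big)_\sharp\ge0$.
   Context: Setup. $\vec e_1=(1,0)^T$, $\vec e_2=(0,1)^T$; ''$\cdot$'' is the Euclidean inner product. $I$ is either the periodic interval $\mathbb R/\mathbb Z$ (with $\partial I=\emptyset$) or $I=(0,1)$ (with $\partial I=\{0,1\}$). $\partial I=\partial_DI\cup\partial_0I\cup\partial_1I\cup\partial_2I$ is a given disjoint partition, and $\widehat\varrho^{(p)}\in\mathbb R$, $p\in\{0,1\}$, are given constants. Let $J\ge3$, $h=1/J$, $q_j=jh$ ($j=0,\dots,J$; $q_0=q_J$ identified in the periodic case). $V^h$ is the space of continuous functions on $\overline I$ (periodic if $I=\mathbb R/\mathbb Z$) that are affine on each $[q_{j-1},q_j]$; $\underline V^h=[V^h]^2$; $\underline V^h_{\partial_0}=\{\vec\eta\in\underline V^h:\vec\eta(\rho)\cdot\vec e_1=0\ \forall\rho\in\partial_0I\}$; $\underline V^h_\partial=\{\vec\eta\in\underline V^h_{\partial_0}:\vec\eta(\rho)\cdot\vec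 e_i=0\ \forall\rho\in\partial_iI,\ i=1,2;\ \vec\eta(\rho)=\vec0\ \forall\rho\in\partial_DI\}$; $W^h_{\partial_0}=\{\chi\in V^h:\chi(\rho)=0\ \forall\rho\in\partial_0I\}$. $(\cdot,\cdot)$ is the $L^2(I)$ inner product, and for piecewise continuous $f,g$ the mass-lumped product is $(f,g)^h=\tfrac h2\sum_{j=1}^J[(fg)(q_j^-)+(fg)(q_{j-1}^+)]$. Two variants: ''lumped'': $(\cdot,\cdot)_\sharp=(\cdot,\cdot)^h$, $W_\sharp=W^h_{\partial_0}$; ''exact'': $(\cdot,\cdot)_\sharp=(\cdot,\cdot)$, $W_\sharp=V^h$. $\vec\nu^h=-[\vec X^h_\rho]^\perp/|\vec X^h_\rho|$ with $(a,b)^\perp=(b,-a)$. The discrete energy of $\vec X\in\underline V^h$ is $E(\vec X)=2\pi(\vec X\cdot\vec e_1,|\vec X_\rho|)+2\pi\sum_{p\in\partial_1I}\widehat\varrho^{(p)}(\vec X(p)\cdot\vec e_1)(\vec X(p)\cdot\vec e_2)+\pi\sum_{p\in\partial_2I}\widehat\varrho^{(p)}(\vec X(p)\cdot\vec e_1)^2$. *)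

From Stdlib Require Import Reals Lra Lia.
Open Scope R_scope.

Inductive variant := lumped | exact.

(* Classes of the disjoint partition of the boundary:
   PD = \partial_D I, P0 = \partial_0 I, P1 = \partial_1 I, P2 = \partial_2 I. *)
Inductive BC := PD | P0 | P1 | P2.

Definition BC_eqb (a b : BC) : bool :=
  match a, b with
  | PD, PD | P0, P0 | P1, P1 | P2, P2 => true
  | _, _ => false
  end.

Definition hh (J : nat) : R := / INR J.
Definition q (J j : nat) : R := INR j * hh J.

(* A function of V^h is represented by its nodal values v j = v(q_j), j = 0..J
   (values at j > J are irrelevant).  In the periodic case (per = true)
   q_J is identified with q_0, i.e. v J = v 0.
   Boundary: when per = false, the point rho = 0 is node 0 and rho = 1 is
   node J; b0, b1 give the class of the points 0 and 1 in the partition of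
   \partial I.  When per = true, \partial I is empty. *)
Definition nodefun := nat -> R.

Definition inPart (per : bool) (J : nat) (b0 b1 c : BC) (j : nat) : Prop :=
  per = false /\ ((j = 0%nat /\ b0 = c) \/ (j = J /\ b1 = c)).

Definition inBd0 (per : bool) (b0 b1 : BC) (rho : R) : Prop :=
  per = false /\ ((rho = 0 /\ b0 = P0) \/ (rho = 1 /\ b1 = P0)).

Definition inV (per : bool) (J : nat) (v : nodefun) : Prop :=
  per = true -> v J = v 0%nat.

Definition inV0 (per : bool) (J : nat) (b0 b1 : BC) (v1 v2 : nodefun) : Prop :=
  inV per J v1 /\ inV per J v2 /\
  (forall j, inPart per J b0 b1 P0 j -> v1 j = 0).

Definition inVD (per : bool) (J : nat) (b0 b1 : BC) (v1 v2 : nodefun) : Prop :=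
  inV0 per J b0 b1 v1 v2 /\
  (forall j, inPart per J b0 b1 P1 j -> v1 j = 0) /\
  (forall j, inPart per J b0 b1 P2 j -> v2 j = 0) /\
  (forall j, inPart per J b0 b1 PD j -> v1 j = 0 /\ v2 j = 0).

Definition inW0 (per : bool) (J : nat) (b0 b1 : BC) (v : nodefun) : Prop :=
  inV per J v /\ (forall j, inPart per J b0 b1 P0 j -> v j = 0).

Definition inWs (var : variant) (per : bool) (J : nat) (b0 b1 : BC)
  (v : nodefun) : Prop :=
  match var with
  | lumped => inW0 per J b0 b1 v
  | exact => inV per J v
  end.

(* Element-wise quantities on element [q_{j-1}, q_j], j = 1..J:
   the derivative v_rho (constant on the element), |X_rho|, and
   nu = -[X_rho]^perp / |X_rho| with (a,b)^perp = (b,-a), i.e.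
   nu = (-X2_rho, X1_rho)/|X_rho|. *)
Definition drho (J : nat) (v : nodefun) (j : nat) : R :=
  (v j - v (pred j)) / hh J.
Definition len (J : nat) (x1 x2 : nodefun) (j : nat) : R :=
  sqrt (drho J x1 j ^ 2 + drho J x2 j ^ 2).
Definition nu1 (J : nat) (x1 x2 : nodefun) (j : nat) : R :=
  - drho J x2 j / len J x1 x2 j.
Definition nu2 (J : nat) (x1 x2 : nodefun) (j : nat) : R :=
  drho J x1 j / len J x1 x2 j.

(* Integral over one element (divided by h) of f*g*k, with f, g, k affine
   on the element having endpoint values (a0,a1), (b0,b1), (c0,c1):
   - lumped: the element part of (.,.)^h, i.e. (1/2)[(fgk)(q_{j-1}^+) + (fgk)(q_j^-)];
   - exact:  int_0^1 (a0(1-s)+a1 s)(b0(1-s)+b1 s)(c0(1-s)+c1 s) ds, computed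
     exactly with int (1-s)^3 = int s^3 = 1/4, int (1-s)^2 s = int (1-s) s^2 = 1/12. *)
Definition elem (var : variant) (a0 a1 b0 b1 c0 c1 : R) : R :=
  match var with
  | lumped => (a0 * b0 * c0 + a1 * b1 * c1) / 2
  | exact =>
      (a0 * b0 * c0 + a1 * b1 * c1) / 4
      + (a0 * b0 * c1 + a0 * b1 * c0 + a1 * b0 * c0
         + a0 * b1 * c1 + a1 * b0 * c1 + a1 * b1 * c0) / 12
  end.

Fixpoint sum1 (n : nat) (F : nat -> R) : R :=
  match n with
  | O => 0
  | S m => sum1 m F + F (S m)
  end.

(* ip3 var J f g k c = (f g k c, 1)_sharp, where f, g, k in V^h (nodal values)
   and c is piecewise constant (value c j on element j).  For var = exact this
   is the L^2(I) integral, for var = lumped the mass-lumped product. *)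
Definition ip3 (var : variant) (J : nat) (f g k c : nat -> R) : R :=
  sum1 J (fun j => hh J * c j *
    elem var (f (pred j)) (f j) (g (pred j)) (g j) (k (pred j)) (k j)).

Definition one : nodefun := fun _ => 1.

(* sum over p in \partial_c I of G (rhohat^(p)) (node of p) *)
Definition bsum (per : bool) (J : nat) (b0 b1 : BC) (r0 r1 : R) (c : BC)
  (G : R -> nat -> R) : R :=
  if per then 0
  else (if BC_eqb b0 c then G r0 0%nat else 0)
     + (if BC_eqb b1 c then G r1 J else 0).

Definition energy (per : bool) (J : nat) (b0 b1 : BC) (r0 r1 : R)
  (x1 x2 : nodefun) : R :=
  2 * PI * ip3 exact J x1 one one (len J x1 x2)
  + 2 * PI * bsum per J b0 b1 r0 r1 P1 (fun r j => r * x1 j * x2 j)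
  + PI * bsum per J b0 b1 r0 r1 P2 (fun r j => r * x1 j ^ 2).

Definition derive_within (a b : R) (f : R -> R) (t l : R) : Prop :=
  forall eps, 0 < eps -> exists delta, 0 < delta /\
    forall s, a <= s <= b -> s <> t -> Rabs (s - t) < delta ->
      Rabs ((f s - f t) / (s - t) - l) < eps.

Definition cont_within (a b : R) (f : R -> R) (t : R) : Prop :=
  forall eps, 0 < eps -> exists delta, 0 < delta /\
    forall s, a <= s <= b -> Rabs (s - t) < delta -> Rabs (f s - f t) < eps.

From Stdlib Require Import Reals Lra Lia Classical.
Open Scope R_scope.

(* With them, the time
   derivative of E(X^h) is 2 pi times the first variation of (X^h.e1, |X^h_rho|) plus
   boundary terms in the direction X^h_t, the X_t.e1 part of the d_1 I terms vanishing
   because X^h_t lies in V^h_d.  That first variation is exactly the part of the curvature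
   equation not involving kappa, tested with eta = X^h_t; testing the velocity equation with
   chi = kappa turns the remaining term into -(X^h.e1 |kappa|^2, |X^h_rho|), which is
   nonnegative since X^h.e1 >= 0 at the nodes and both inner products have nonnegative
   nodal (or element) weights. *)

Lemma limit1_in_restrict (f g : R -> R) (D D' : R -> Prop) l x :
  (forall s, D' s -> D s /\ f s = g s) ->
  limit1_in f D l x -> limit1_in g D' l x.
Proof.
  intros Hfg Hf eps Heps.
  destruct (Hf eps Heps) as [alp [Halp Hlim]].
  exists alp; split; [exact Halp|].
  intros s [Hs Hst]. destruct (Hfg s Hs) as [HDs <-]. exact (Hlim s (conj HDs Hst)).
Qed.

(* Caratheodory's form of differentiability: the slope is continuous at y. *)
Definition slope (F : R -> R) (y F' z : R) : R :=
  if Req_dec_T z y then F' else (F z - F y) / (z - y).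

Lemma derivable_pt_lim_slope F y F' :
  derivable_pt_lim F y F' -> limit1_in (slope F y F') (fun _ => True) F' y.
Proof.
  intros HF eps Heps. destruct (HF eps Heps) as [delta Hdelta].
  exists delta; split; [apply cond_pos|].
  intros z [_ Hz]; simpl in *; unfold Rdist in *. unfold slope.
  destruct (Req_dec_T z y) as [_|Hzy].
  - rewrite Rminus_diag, Rabs_R0. lra.
  - replace z with (y + (z - y)) at 1 by ring.
    apply Hdelta; [lra | exact Hz].
Qed.

Section DeriveWithin.

Variables a b : R.

Definition diff_quot (f : R -> R) (t s : R) : R := (f s - f t) / (s - t).

Definition punctured (t s : R) : Prop := a <= s <= b /\ s <> t.

Lemma derive_within_limit f t l :
  derive_within a b f t l <-> limit1_in (diff_quot f t) (punctured t) l t.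
Proof.
  split.
  - intros Hf eps Heps. destruct (Hf eps Heps) as [delta [Hdelta Hs]].
    exists delta; split; [exact Hdelta|].
    intros s [[Hab Hst] Hd]. exact (Hs s Hab Hst Hd).
  - intros Hf eps Heps. destruct (Hf eps Heps) as [delta [Hdelta Hs]].
    exists delta; split; [exact Hdelta|].
    intros s Hab Hst Hd. exact (Hs s (conj (conj Hab Hst) Hd)).
Qed.

Lemma derive_within_ext f g t l :
  (forall s, f s = g s) -> derive_within a b f t l -> derive_within a b g t l.
Proof.
  intros Hfg. rewrite !derive_within_limit. apply limit1_in_restrict.
  intros s Hs; split; [exact Hs|]. unfold diff_quot. rewrite !Hfg. reflexivity.
Qed.

Lemma derive_within_const c t : derive_within a b (fun _ => c) t 0.
Proof.
  apply derive_within_limit.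
  apply limit1_in_restrict with (f := fun _ => 0) (D := punctured t).
  - intros s Hs; split; [exact Hs|]. unfold diff_quot. unfold Rdiv. ring.
  - exact (limit_free (fun _ => 0) _ 0 t).
Qed.

Lemma derive_within_plus f g t lf lg l :
  derive_within a b f t lf -> derive_within a b g t lg -> l = lf + lg ->
  derive_within a b (fun s => f s + g s) t l.
Proof.
  rewrite !derive_within_limit. intros Hf Hg ->.
  apply limit1_in_restrict with (D := punctured t)
    (f := fun s => diff_quot f t s + diff_quot g t s);
    [| exact (limit_plus _ _ _ _ _ _ Hf Hg)].
  intros s Hs; split; [exact Hs|]. unfold diff_quot. field.
  destruct Hs as [_ Hst]. lra.
Qed.

Lemma derive_within_continuous f t l :
  derive_within a b f t l -> limit1_in f (punctured t) (f t) t.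
Proof.
  rewrite derive_within_limit. intros Hf.
  assert (Hlin : limit1_in (fun s => f t + diff_quot f t s * (s - t)) (punctured t)
                   (f t + l * (t - t)) t).
  { apply limit_plus; [exact (limit_free (fun _ => f t) _ t t)|].
    apply limit_mul; [exact Hf|].
    apply limit_minus; [apply lim_x | exact (limit_free (fun _ => t) _ t t)]. }
  rewrite Rminus_diag, Rmult_0_r, Rplus_0_r in Hlin.
  revert Hlin; apply limit1_in_restrict.
  intros s Hs; split; [exact Hs|]. unfold diff_quot. field.
  destruct Hs as [_ Hst]. lra.
Qed.

Lemma derive_within_mult f g t lf lg l :
  derive_within a b f t lf -> derive_within a b g t lg -> l = lf * g t + f t * lg ->
  derive_within a b (fun s => f s * g s) t l.
Proof.
  intros Hf Hg ->. pose proof (derive_within_continuous g t lg Hg) as Hgc.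
  rewrite derive_within_limit in *.
  apply limit1_in_restrict with (D := punctured t)
    (f := fun s => diff_quot f t s * g s + f t * diff_quot g t s).
  - intros s Hs; split; [exact Hs|]. unfold diff_quot. field.
    destruct Hs as [_ Hst]. lra.
  - apply limit_plus; [exact (limit_mul _ _ _ _ _ _ Hf Hgc)|].
    apply limit_mul; [exact (limit_free (fun _ => f t) _ t t) | exact Hg].
Qed.

Lemma derive_within_comp F F' g t lg l :
  derivable_pt_lim F (g t) F' -> derive_within a b g t lg -> l = F' * lg ->
  derive_within a b (fun s => F (g s)) t l.
Proof.
  intros HF Hg ->. pose proof (derive_within_continuous g t lg Hg) as Hgc.
  rewrite derive_within_limit in *.
  pose proof (limit_comp _ _ _ _ _ _ _ Hgc (derivable_pt_lim_slope F (g t) F' HF)) as Hslope.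
  apply limit1_in_restrict with (D := punctured t)
    (f := fun s => slope F (g t) F' (g s) * diff_quot g t s).
  - intros s Hs; split; [exact Hs|]. unfold diff_quot, slope.
    destruct Hs as [_ Hst].
    destruct (Req_dec_T (g s) (g t)) as [->|Hne]; field; lra.
  - apply limit_mul; [|exact Hg].
    revert Hslope; apply limit1_in_restrict.
    intros s Hs. split; [split; [exact Hs | exact I] | reflexivity].
Qed.

Lemma derive_within_sum1 n (F : R -> nat -> R) F' t :
  (forall j, (1 <= j <= n)%nat -> derive_within a b (fun s => F s j) t (F' j)) ->
  derive_within a b (fun s => sum1 n (F s)) t (sum1 n F').
Proof.
  induction n as [|n IH]; intros HF; simpl.
  - apply derive_within_const.
  - apply derive_within_plus with (sum1 n F') (F' (S n)); [| |reflexivity].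
    + apply IH. intros j Hj. apply HF. lia.
    + apply HF. lia.
Qed.

End DeriveWithin.

Lemma sum1_ext n f g : (forall j, (1 <= j <= n)%nat -> f j = g j) -> sum1 n f = sum1 n g.
Proof.
  induction n as [|n IH]; intros Hfg; simpl; [reflexivity|].
  rewrite IH, Hfg; [reflexivity | lia | intros j Hj; apply Hfg; lia].
Qed.

Lemma sum1_plus n f g : sum1 n (fun j => f j + g j) = sum1 n f + sum1 n g.
Proof. induction n as [|n IH]; simpl; [ring|]. rewrite IH. ring. Qed.

Lemma sum1_nonneg n f : (forall j, (1 <= j <= n)%nat -> 0 <= f j) -> 0 <= sum1 n f.
Proof.
  induction n as [|n IH]; intros Hf; simpl; [lra|].
  apply Rplus_le_le_0_compat; [apply IH; intros j Hj|]; apply Hf; lia.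
Qed.

Lemma hh_pos J : (0 < J)%nat -> 0 < hh J.
Proof. intros HJ. apply Rinv_0_lt_compat, lt_0_INR, HJ. Qed.

Lemma elem_one_one var a0 a1 : elem var a0 a1 1 1 1 1 = (a0 + a1) / 2.
Proof. destruct var; simpl; field. Qed.

Lemma ip3_one_one var J f c :
  ip3 var J f one one c = sum1 J (fun j => hh J * c j * ((f (pred j) + f j) / 2)).
Proof. apply sum1_ext. intros j _. unfold one. rewrite elem_one_one. reflexivity. Qed.

Lemma ip3_plus_c var J f g k c1 c2 :
  ip3 var J f g k (fun j => c1 j + c2 j) = ip3 var J f g k c1 + ip3 var J f g k c2.
Proof. unfold ip3. rewrite <- sum1_plus. apply sum1_ext. intros j _. ring. Qed.

Lemma elem_sym var a0 a1 b0 b1 c0 c1 :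
  elem var a0 a1 b0 b1 c0 c1 = elem var a0 a1 c0 c1 b0 b1.
Proof. destruct var; simpl; field. Qed.

Lemma ip3_sym var J f g k c : ip3 var J f g k c = ip3 var J f k g c.
Proof. apply sum1_ext. intros j _. rewrite elem_sym. reflexivity. Qed.

Lemma elem_sqr_nonneg var a0 a1 b0 b1 :
  0 <= a0 -> 0 <= a1 -> 0 <= elem var a0 a1 b0 b1 b0 b1.
Proof.
  intros Ha0 Ha1. destruct var; simpl.
  - assert (0 <= a0 * (b0 * b0)) by (apply Rmult_le_pos; nra).
    assert (0 <= a1 * (b1 * b1)) by (apply Rmult_le_pos; nra).
    lra.
  - (* the exact element integral is (a0 Q0 + a1 Q1)/12 with positive definite Q0, Q1 *)
    assert (0 <= a0 * (3 * b0 * b0 + 2 * b0 * b1 + b1 * b1)) by (apply Rmult_le_pos; nra).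
    assert (0 <= a1 * (3 * b1 * b1 + 2 * b0 * b1 + b0 * b0)) by (apply Rmult_le_pos; nra).
    nra.
Qed.

Lemma ip3_sqr_nonneg var J f g c :
  (0 < J)%nat -> (forall j, (j <= J)%nat -> 0 <= f j) ->
  (forall j, (1 <= j <= J)%nat -> 0 < c j) -> 0 <= ip3 var J f g g c.
Proof.
  intros HJ Hf Hc. apply sum1_nonneg. intros j Hj.
  pose proof (hh_pos J HJ). pose proof (Hc j Hj).
  apply Rmult_le_pos; [apply Rmult_le_pos; lra|].
  apply elem_sqr_nonneg; apply Hf; lia.
Qed.

Lemma BC_eqb_eq c c' : BC_eqb c c' = true -> c = c'.
Proof. destruct c, c'; simpl; congruence. Qed.

Lemma inPart_le per J b0 b1 c j : inPart per J b0 b1 c j -> (j <= J)%nat.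
Proof. intros [_ [[-> _] | [-> _]]]; lia. Qed.

Lemma bsum_scal per J b0 b1 r0 r1 c G k :
  bsum per J b0 b1 r0 r1 c (fun r j => k * G r j) = k * bsum per J b0 b1 r0 r1 c G.
Proof. unfold bsum. destruct per, (BC_eqb b0 c), (BC_eqb b1 c); ring. Qed.

Definition energy_variation per J b0 b1 r0 r1 (x1 x2 eta1 eta2 : nodefun) : R :=
  ip3 exact J eta1 one one (len J x1 x2)
  + (ip3 exact J x1 one one (fun j => drho J x1 j * drho J eta1 j / len J x1 x2 j)
     + ip3 exact J x1 one one (fun j => drho J x2 j * drho J eta2 j / len J x1 x2 j))
  + (bsum per J b0 b1 r0 r1 P1 (fun r j => r * x1 j * eta2 j)
     + bsum per J b0 b1 r0 r1 P2 (fun r j => r * x1 j * eta1 j)).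

Section SchemeDerivatives.

Variables (a b t : R) (J : nat).

Lemma derive_within_bsum per b0 b1 r0 r1 c (G : R -> R -> nat -> R) G' :
  (forall r j, inPart per J b0 b1 c j -> derive_within a b (fun s => G s r j) t (G' r j)) ->
  derive_within a b (fun s => bsum per J b0 b1 r0 r1 c (G s)) t (bsum per J b0 b1 r0 r1 c G').
Proof.
  intros HG. unfold bsum. destruct per; [apply derive_within_const|].
  eapply derive_within_plus; [| |reflexivity].
  - destruct (BC_eqb b0 c) eqn:E; [|apply derive_within_const].
    apply HG. apply BC_eqb_eq in E. split; auto.
  - destruct (BC_eqb b1 c) eqn:E; [|apply derive_within_const].
    apply HG. apply BC_eqb_eq in E. split; auto.
Qed.

Lemma derive_within_ip3_one_one var (f c : R -> nodefun) f' c' :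
  (forall j, (j <= J)%nat -> derive_within a b (fun s => f s j) t (f' j)) ->
  (forall j, (1 <= j <= J)%nat -> derive_within a b (fun s => c s j) t (c' j)) ->
  derive_within a b (fun s => ip3 var J (f s) one one (c s)) t
    (ip3 var J f' one one (c t) + ip3 var J (f t) one one c').
Proof.
  intros Hf Hc.
  eapply derive_within_ext; [intros s; symmetry; apply ip3_one_one|].
  replace (_ + _) with (sum1 J (fun j => hh J * c' j * ((f t (pred j) + f t j) / 2)
                                      + hh J * c t j * ((f' (pred j) + f' j) / 2)))
    by (rewrite sum1_plus, !ip3_one_one; ring).
  apply derive_within_sum1. intros j Hj.
  eapply derive_within_mult.
  - eapply derive_within_mult; [apply derive_within_const | apply Hc, Hj | reflexivity].
  - eapply derive_within_mult; [|apply derive_within_const|reflexivity].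
    eapply derive_within_plus; [apply Hf; lia | apply Hf; lia | reflexivity].
  - unfold Rdiv. ring.
Qed.

Lemma derive_within_drho (f : R -> nodefun) f' j :
  derive_within a b (fun s => f s j) t (f' j) ->
  derive_within a b (fun s => f s (pred j)) t (f' (pred j)) ->
  derive_within a b (fun s => drho J (f s) j) t (drho J f' j).
Proof.
  intros Hj Hpj. unfold drho, Rdiv.
  eapply derive_within_mult; [|apply derive_within_const|].
  - eapply derive_within_ext with (fun s => f s j + (-1) * f s (pred j)); [intros; ring|].
    eapply derive_within_plus; [exact Hj| |reflexivity].
    eapply derive_within_mult; [apply derive_within_const | exact Hpj | reflexivity].
  - ring.
Qed.

Lemma derive_within_len (x1 x2 : R -> nodefun) x1' x2' j :
  (forall i, (i <= J)%nat -> derive_within a b (fun s => x1 s i) t (x1' i)) ->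
  (forall i, (i <= J)%nat -> derive_within a b (fun s => x2 s i) t (x2' i)) ->
  (1 <= j <= J)%nat -> len J (x1 t) (x2 t) j > 0 ->
  derive_within a b (fun s => len J (x1 s) (x2 s) j) t
    ((drho J (x1 t) j * drho J x1' j + drho J (x2 t) j * drho J x2' j) / len J (x1 t) (x2 t) j).
Proof.
  intros H1 H2 Hj Hlen. unfold len in *.
  set (u := drho J (x1 t) j ^ 2 + drho J (x2 t) j ^ 2) in *.
  assert (Hu : 0 < u).
  { destruct (Rle_lt_dec u 0) as [Hu|Hu]; [|exact Hu].
    rewrite sqrt_neg_0 in Hlen by exact Hu. lra. }
  assert (Hd1 := derive_within_drho x1 x1' j ltac:(apply H1; lia) ltac:(apply H1; lia)).
  assert (Hd2 := derive_within_drho x2 x2' j ltac:(apply H2; lia) ltac:(apply H2; lia)).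
  eapply derive_within_comp with (g := fun s => drho J (x1 s) j ^ 2 + drho J (x2 s) j ^ 2).
  - apply derivable_pt_lim_sqrt, Hu.
  - eapply derive_within_plus; [| |reflexivity].
    + apply derive_within_ext with (fun s => drho J (x1 s) j * drho J (x1 s) j);
        [intros s; ring | eapply derive_within_mult; [exact Hd1 | exact Hd1 | reflexivity]].
    + apply derive_within_ext with (fun s => drho J (x2 s) j * drho J (x2 s) j);
        [intros s; ring | eapply derive_within_mult; [exact Hd2 | exact Hd2 | reflexivity]].
  - fold u. field. apply Rgt_not_eq, sqrt_lt_R0, Hu.
Qed.

Lemma derive_within_energy per b0 b1 r0 r1 (x1 x2 : R -> nodefun) x1' x2' :
  (forall j, (j <= J)%nat -> derive_within a b (fun s => x1 s j) t (x1' j)) ->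
  (forall j, (j <= J)%nat -> derive_within a b (fun s => x2 s j) t (x2' j)) ->
  (forall j, (1 <= j <= J)%nat -> len J (x1 t) (x2 t) j > 0) ->
  (forall j, inPart per J b0 b1 P1 j -> x1' j = 0) ->
  derive_within a b (fun s => energy per J b0 b1 r0 r1 (x1 s) (x2 s)) t
    (2 * PI * energy_variation per J b0 b1 r0 r1 (x1 t) (x2 t) x1' x2').
Proof.
  intros H1 H2 Hlen HP1. unfold energy.
  assert (Hlen' : forall j, (1 <= j <= J)%nat ->
            derive_within a b (fun s => len J (x1 s) (x2 s) j) t
              (drho J (x1 t) j * drho J x1' j / len J (x1 t) (x2 t) j
               + drho J (x2 t) j * drho J x2' j / len J (x1 t) (x2 t) j)).
  { intros j Hj. rewrite <- Rdiv_plus_distr. apply derive_within_len; auto. }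
  pose proof (derive_within_ip3_one_one exact _ _ _ _ H1 Hlen') as Hbulk.
  rewrite ip3_plus_c in Hbulk.
  assert (Hmixed : derive_within a b
            (fun s => bsum per J b0 b1 r0 r1 P1 (fun r j => r * x1 s j * x2 s j)) t
            (bsum per J b0 b1 r0 r1 P1 (fun r j => r * x1 t j * x2' j))).
  { apply derive_within_bsum. intros r j Hj. pose proof (inPart_le _ _ _ _ _ _ Hj).
    eapply derive_within_mult;
      [eapply derive_within_mult; [apply derive_within_const | apply H1; lia | reflexivity]
      | apply H2; lia | ].
    rewrite (HP1 j Hj). ring. }
  assert (Hsquare : derive_within a b
            (fun s => bsum per J b0 b1 r0 r1 P2 (fun r j => r * x1 s j ^ 2)) t
            (bsum per J b0 b1 r0 r1 P2 (fun r j => 2 * (r * x1 t j * x1' j)))).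
  { apply derive_within_bsum. intros r j Hj. pose proof (inPart_le _ _ _ _ _ _ Hj).
    apply derive_within_ext with (fun s => r * x1 s j * x1 s j); [intros s; ring|].
    eapply derive_within_mult;
      [eapply derive_within_mult; [apply derive_within_const | apply H1; lia | reflexivity]
      | apply H1; lia | ring]. }
  rewrite bsum_scal in Hsquare.
  eapply derive_within_plus; [eapply derive_within_plus; [| |reflexivity] | |].
  1-3: eapply derive_within_mult; [apply derive_within_const | eassumption | reflexivity].
  change (fun j => len J (x1 t) (x2 t) j) with (len J (x1 t) (x2 t)).
  unfold energy_variation. ring.
Qed.

End SchemeDerivatives.

Lemma q_S J k : q J (S k) = q J k + hh J.
Proof. unfold q. rewrite S_INR. ring. Qed.

Lemma inBd0_node per J b0 b1 j :
  (0 < J)%nat -> inBd0 per b0 b1 (q J j) -> inPart per J b0 b1 P0 j.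
Proof.
  intros HJ [Hper Hq]. split; [exact Hper|].
  assert (HJR : 0 < INR J) by (apply lt_0_INR, HJ).
  assert (Hj : INR j = q J j * INR J) by (unfold q, hh; field; lra).
  destruct Hq as [[Hq Hb] | [Hq Hb]]; [left | right]; split; auto; apply INR_eq.
  - rewrite Hj, Hq. simpl. ring.
  - rewrite Hj, Hq. ring.
Qed.

Lemma nodes_nonneg per J b0 b1 (x1 x2 : nodefun) :
  (0 < J)%nat -> inV0 per J b0 b1 x1 x2 ->
  (forall j rho, (1 <= j <= J)%nat ->
     q J (pred j) <= rho <= q J j -> ~ inBd0 per b0 b1 rho ->
     x1 (pred j) + (x1 j - x1 (pred j)) * (rho - q J (pred j)) / hh J > 0) ->
  forall j, (j <= J)%nat -> 0 <= x1 j.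
Proof.
  intros HJ [_ [_ H0]] Hpos j Hj. pose proof (hh_pos J HJ) as Hh.
  destruct (classic (inBd0 per b0 b1 (q J j))) as [Hbd | Hint].
  - rewrite (H0 j (inBd0_node per J b0 b1 j HJ Hbd)). lra.
  - (* a node off \partial_0 I is an endpoint of an adjacent element *)
    destruct j as [|k].
    + specialize (Hpos 1%nat (q J 0) ltac:(lia)). simpl in Hpos. rewrite q_S in Hpos.
      specialize (Hpos ltac:(lra) Hint).
      replace (x1 0%nat + _) with (x1 0%nat) in Hpos by (field; lra). lra.
    + specialize (Hpos (S k) (q J (S k)) ltac:(lia)). simpl in Hpos. rewrite q_S in *.
      specialize (Hpos ltac:(lra) Hint).
      replace (x1 k + _) with (x1 (S k)) in Hpos by (field; lra). lra.
Qed.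
Section Flow.

Variables (per : bool) (J : nat) (b0 b1 : BC) (r0 r1 T : R) (X1 X2 Xt1 Xt2 : R -> nodefun).

Hypothesis HJ : (3 <= J)%nat.
Hypothesis HC1 : forall j t, (j <= J)%nat -> 0 <= t <= T ->
  derive_within 0 T (fun s => X1 s j) t (Xt1 t j) /\
  derive_within 0 T (fun s => X2 s j) t (Xt2 t j) /\
  cont_within 0 T (fun s => Xt1 s j) t /\
  cont_within 0 T (fun s => Xt2 s j) t.
Hypothesis HV0 : forall t, 0 <= t <= T -> inV0 per J b0 b1 (X1 t) (X2 t).
Hypothesis Hlen : forall t j, 0 <= t <= T -> (1 <= j <= J)%nat -> len J (X1 t) (X2 t) j > 0.
Hypothesis Hpos : forall t j rho, 0 <= t <= T -> (1 <= j <= J)%nat ->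
  q J (pred j) <= rho <= q J j -> ~ inBd0 per b0 b1 rho ->
  X1 t (pred j) + (X1 t j - X1 t (pred j)) * (rho - q J (pred j)) / hh J > 0.
Hypothesis HXt : forall t, 0 < t <= T -> inVD per J b0 b1 (Xt1 t) (Xt2 t).

Lemma energy_dissipation t D :
  0 < t <= T -> energy_variation per J b0 b1 r0 r1 (X1 t) (X2 t) (Xt1 t) (Xt2 t) = - D ->
  derive_within 0 T (fun s => energy per J b0 b1 r0 r1 (X1 s) (X2 s)) t (- (2 * PI) * D).
Proof.
  intros Ht Hvar.
  replace (- (2 * PI) * D) with
    (2 * PI * energy_variation per J b0 b1 r0 r1 (X1 t) (X2 t) (Xt1 t) (Xt2 t))
    by (rewrite Hvar; ring).
  apply derive_within_energy.
  - intros j Hj. apply (HC1 j t Hj). lra.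
  - intros j Hj. apply (HC1 j t Hj). lra.
  - intros j Hj. apply Hlen; [lra | exact Hj].
  - apply (HXt t Ht).
Qed.

Lemma flow_nodes_nonneg t : 0 <= t <= T -> forall j, (j <= J)%nat -> 0 <= X1 t j.
Proof.
  intros Ht. apply nodes_nonneg with per b0 b1 (X2 t); [lia | apply HV0, Ht |].
  intros j rho Hj. apply Hpos; [exact Ht | exact Hj].
Qed.

End Flow.

Theorem mainTheorem9
  (var : variant) (per : bool) (J : nat) (b0 b1 : BC) (r0 r1 T : R)
  (X1 X2 Xt1 Xt2 : R -> nodefun)
  (HJ : (3 <= J)%nat) (HT : 0 < T)
  (HC1 : forall j t, (j <= J)%nat -> 0 <= t <= T ->
     derive_within 0 T (fun s => X1 s j) t (Xt1 t j) /\
     derive_within 0 T (fun s => X2 s j) t (Xt2 t j) /\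
     cont_within 0 T (fun s => Xt1 s j) t /\
     cont_within 0 T (fun s => Xt2 s j) t)
  (HV0 : forall t, 0 <= t <= T -> inV0 per J b0 b1 (X1 t) (X2 t))
  (Hlen : forall t j, 0 <= t <= T -> (1 <= j <= J)%nat ->
     len J (X1 t) (X2 t) j > 0)
  (Hpos : forall t j rho, 0 <= t <= T -> (1 <= j <= J)%nat ->
     q J (pred j) <= rho <= q J j -> ~ inBd0 per b0 b1 rho ->
     X1 t (pred j) + (X1 t j - X1 t (pred j)) * (rho - q J (pred j)) / hh J > 0)
  (HXt : forall t, 0 < t <= T -> inVD per J b0 b1 (Xt1 t) (Xt2 t)) :
  (forall kappa : R -> nodefun,
     (forall t, 0 < t <= T -> inWs var per J b0 b1 (kappa t)) ->
     (forall t, 0 < t <= T -> forall chi, inWs var per J b0 b1 chi ->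
        ip3 var J (X1 t) (Xt1 t) chi
            (fun j => nu1 J (X1 t) (X2 t) j * len J (X1 t) (X2 t) j)
        + ip3 var J (X1 t) (Xt2 t) chi
            (fun j => nu2 J (X1 t) (X2 t) j * len J (X1 t) (X2 t) j)
        = ip3 var J (X1 t) (kappa t) chi (len J (X1 t) (X2 t))) ->
     (forall t, 0 < t <= T -> forall eta1 eta2, inVD per J b0 b1 eta1 eta2 ->
        ip3 var J (X1 t) (kappa t) eta1
            (fun j => nu1 J (X1 t) (X2 t) j * len J (X1 t) (X2 t) j)
        + ip3 var J (X1 t) (kappa t) eta2
            (fun j => nu2 J (X1 t) (X2 t) j * len J (X1 t) (X2 t) j)
        + ip3 exact J eta1 one one (len J (X1 t) (X2 t))
        + (ip3 exact J (X1 t) one one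
             (fun j => drho J (X1 t) j * drho J eta1 j / len J (X1 t) (X2 t) j)
           + ip3 exact J (X1 t) one one
             (fun j => drho J (X2 t) j * drho J eta2 j / len J (X1 t) (X2 t) j))
        = - (bsum per J b0 b1 r0 r1 P1 (fun r j => r * X1 t j * eta2 j)
             + bsum per J b0 b1 r0 r1 P2 (fun r j => r * X1 t j * eta1 j))) ->
     forall t, 0 < t <= T ->
       derive_within 0 T (fun s => energy per J b0 b1 r0 r1 (X1 s) (X2 s)) t
         (- (2 * PI) * ip3 var J (X1 t) (kappa t) (kappa t) (len J (X1 t) (X2 t)))
       /\ ip3 var J (X1 t) (kappa t) (kappa t) (len J (X1 t) (X2 t)) >= 0)
  /\
  (forall kappa1 kappa2 : R -> nodefun,
     (forall t, 0 < t <= T ->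
        inWs var per J b0 b1 (kappa1 t) /\ inWs var per J b0 b1 (kappa2 t)) ->
     (forall t, 0 < t <= T -> forall chi1 chi2,
        inWs var per J b0 b1 chi1 -> inWs var per J b0 b1 chi2 ->
        ip3 var J (X1 t) (Xt1 t) chi1 (len J (X1 t) (X2 t))
        + ip3 var J (X1 t) (Xt2 t) chi2 (len J (X1 t) (X2 t))
        = ip3 var J (X1 t) (kappa1 t) chi1 (len J (X1 t) (X2 t))
        + ip3 var J (X1 t) (kappa2 t) chi2 (len J (X1 t) (X2 t))) ->
     (forall t, 0 < t <= T -> forall eta1 eta2, inVD per J b0 b1 eta1 eta2 ->
        ip3 var J (X1 t) (kappa1 t) eta1 (len J (X1 t) (X2 t))
        + ip3 var J (X1 t) (kappa2 t) eta2 (len J (X1 t) (X2 t))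
        + ip3 exact J eta1 one one (len J (X1 t) (X2 t))
        + (ip3 exact J (X1 t) one one
             (fun j => drho J (X1 t) j * drho J eta1 j / len J (X1 t) (X2 t) j)
           + ip3 exact J (X1 t) one one
             (fun j => drho J (X2 t) j * drho J eta2 j / len J (X1 t) (X2 t) j))
        = - (bsum per J b0 b1 r0 r1 P1 (fun r j => r * X1 t j * eta2 j)
             + bsum per J b0 b1 r0 r1 P2 (fun r j => r * X1 t j * eta1 j))) ->
     forall t, 0 < t <= T ->
       derive_within 0 T (fun s => energy per J b0 b1 r0 r1 (X1 s) (X2 s)) t
         (- (2 * PI) * (ip3 var J (X1 t) (kappa1 t) (kappa1 t) (len J (X1 t) (X2 t))
                       + ip3 var J (X1 t) (kappa2 t) (kappa2 t) (len J (X1 t) (X2 t))))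
       /\ ip3 var J (X1 t) (kappa1 t) (kappa1 t) (len J (X1 t) (X2 t))
          + ip3 var J (X1 t) (kappa2 t) (kappa2 t) (len J (X1 t) (X2 t)) >= 0).
Proof.
  assert (HJ0 : (0 < J)%nat) by lia.
  assert (Hnodes : forall t, 0 < t <= T -> forall j, (j <= J)%nat -> 0 <= X1 t j)
    by (intros t Ht; eapply flow_nodes_nonneg; eauto; lra).
  assert (Hlen_t : forall t, 0 < t <= T -> forall j, (1 <= j <= J)%nat -> 0 < len J (X1 t) (X2 t) j)
    by (intros t Ht j Hj; apply Hlen; [lra | exact Hj]).
  split.
  - intros kappa Hkappa Hnormal Hcurv t Ht.
    pose proof (Hcurv t Ht _ _ (HXt t Ht)) as Heta.
    pose proof (Hnormal t Ht _ (Hkappa t Ht)) as Hchi.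
    rewrite !(ip3_sym var J (X1 t) (Xt1 t)), !(ip3_sym var J (X1 t) (Xt2 t)) in Hchi.
    split.
    + eapply energy_dissipation; eauto. unfold energy_variation. lra.
    + apply Rle_ge, ip3_sqr_nonneg; auto.
  - intros kappa1 kappa2 Hkappa Hnormal Hcurv t Ht.
    destruct (Hkappa t Ht) as [Hkappa1 Hkappa2].
    pose proof (Hcurv t Ht _ _ (HXt t Ht)) as Heta.
    pose proof (Hnormal t Ht _ _ Hkappa1 Hkappa2) as Hchi.
    rewrite !(ip3_sym var J (X1 t) (Xt1 t)), !(ip3_sym var J (X1 t) (Xt2 t)) in Hchi.
    split.
    + eapply energy_dissipation; eauto. unfold energy_variation. lra.
    + apply Rle_ge, Rplus_le_le_0_compat; apply ip3_sqr_nonneg; auto.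
Qed.
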